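(* Let $m$ be a positive integer and let $r,\ell,h,p,q$ be nonnegative integers with $\ell\ge 2$ satisfying: (1) $h<2^{\ell-2}$; (2) $rm=p\cdot 2^{\ell+1}+2^{\ell-1}+h$; (3) $(r+1)m\leq p\cdot 2^{\ell+1}+5\cdot 2^{\ell-2}$; (4) $(r+2^{\ell-2})m=q\cdot 2^{\ell+1}+3\cdot 2^{\ell-2}+h$; (5) $\mathbf t_{p+1}\neq\mathbf t_{q+1}$. Then $\langle rm+1,(r+1)m\rangle=\langle (r+2^{\ell-2})m+1,(r+2^{\ell-2}+1)m\rangle$, and consequently $\mathfrak K(m)\leq r+2^{\ell-2}+1$.
   Context: The Thue–Morse word is $\mathbf t=\mathbf t_1\mathbf t_2\cdots$ where $\mathbf t_i\in\{0,1\}$ has the parity of the number of $1$'s in the binary expansion of $i-1$. For positive integers $\alpha\le\beta$, $\langle\alpha,\beta\rangle=\mathbf t_\alpha\mathbf t_{\alpha+1}\cdots\mathbf t_\beta$. A $k$-anti-power is a word $w_1\cdots w_k$ with $w_1,\dots,w_k$ pairwise distinct words of equal length. For a positive integer $m$, $\mathfrak K(m)$ is the smallest positive integer $k$ such that the prefix $\langle 1,km\rangle$ of $\mathbf t$ is not a $k$-anti-power (i.e. the smallest $k$ such that $\langle (k-1)m+1,km\rangle=\langle nm+1,(n+1)m\rangle$ for some $0\le n<k-1$). *)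

From mathcomp Require Import all_boot.
Set Implicit Arguments. Unset Strict Implicit. Unset Printing Implicit Defensive.

Fixpoint popcount_aux (fuel n : nat) : nat :=
  match fuel with
  | 0 => 0
  | f.+1 => if n is 0 then 0 else odd n + popcount_aux f n./2
  end.
Definition popcount (n : nat) : nat := popcount_aux n n.

(* Thue--Morse word, 1-indexed: t_i = parity of popcount (i-1) *)
Definition tm (i : nat) : bool := odd (popcount i.-1).

Definition factor (a b : nat) : seq bool := [seq tm i | i <- iota a (b.+1 - a)].

(* block n (0-based) of length m of the prefix: <n m + 1, (n+1) m> *)
Definition block (m n : nat) : seq bool := factor (n * m).+1 (n.+1 * m).

Definition is_antipower_prefix (m k : nat) : Prop :=
  forall i j, i < k -> j < k -> block m i = block m j -> i = j.

(* K(m) <= N  :<=>  the smallest positive k with <1,km> not a k-anti-power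
   exists and is at most N *)
Definition Kfrak_le (m N : nat) : Prop :=
  exists k, 0 < k <= N /\ ~ is_antipower_prefix m k.

(** Write [a = 2^(l-2)].  Hypotheses (2)-(4) place the two blocks as
    [<p 8a + 2a + h + 1, ...>] and [<q 8a + 3a + h + 1, ...>], both of length
    [m <= 3a - h].  Inside a block of length [8a] of the Thue--Morse word,
    [t_(n 8a + x + 1) = t_(n+1) xor t_(x+1)], and the windows of length [3a]
    starting at offsets [2a] and [3a] are complementary (they read
    [t_3 t_4 t_5] and [t_4 t_5 t_6] at scale [a], i.e. [1 0 1] against
    [0 1 0]).  Since [t_(p+1) <> t_(q+1)], the two complementations cancel and
    the blocks coincide. *)

From mathcomp Require Import all_boot.
From mathcomp Require Import zify.

Lemma half_ltS n : n.+1./2 <= n.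
Proof. rewrite leq_half_double -addnn; lia. Qed.

Lemma popcount_aux_fuel f g n : n <= f -> n <= g ->
  popcount_aux f n = popcount_aux g n.
Proof.
elim: f g n => [|f IHf] [|g] [|n] //= lenf leng.
by congr (_ + _); apply: IHf; have := half_ltS n; lia.
Qed.

Lemma popcountE n : 0 < n -> popcount n = odd n + popcount n./2.
Proof.
case: n => [|n] // _; rewrite /popcount /=.
by congr (_ + _); apply: popcount_aux_fuel; have := half_ltS n; lia.
Qed.

Lemma popcount_bit_double (b : bool) n : popcount (b + n.*2) = b + popcount n.
Proof.
have [-> | n_gt0] := posnP n; first by case: b.
rewrite popcountE ?half_bit_double ?oddD ?odd_double ?addbF ?oddb //.
by rewrite -double_gt0 in n_gt0; lia.
Qed.

Lemma popcount_mul_expD n k x : x < 2 ^ k ->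
  popcount (n * 2 ^ k + x) = popcount n + popcount x.
Proof.
elim: k n x => [|k IHk] n x.
  by rewrite expn0 ltnS leqn0 => /eqP->; rewrite muln1 !addn0.
rewrite expnS => ltx.
have lt_half : x./2 < 2 ^ k.
  by move: ltx; rewrite -{1}(odd_double_half x); case: (odd x); lia.
have -> : n * (2 * 2 ^ k) + x = odd x + (n * 2 ^ k + x./2).*2.
  by rewrite -{1}(odd_double_half x) -!muln2; lia.
rewrite -{3}(odd_double_half x) !popcount_bit_double IHk //; lia.
Qed.

Lemma tm_mul_expD n k x : x < 2 ^ k -> tm (n * 2 ^ k + x).+1 = tm n.+1 (+) tm x.+1.
Proof. by move=> ltx; rewrite /tm /= popcount_mul_expD // oddD. Qed.

Lemma tm_window_compl k x : x < 3 * 2 ^ k ->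
  tm (2 * 2 ^ k + x).+1 = ~~ tm (3 * 2 ^ k + x).+1.
Proof.
move=> ltx.
have [ltx1 | lex1] := ltnP x (2 ^ k).
  by rewrite !tm_mul_expD //; case: (tm x.+1).
have [ltx2 | lex2] := ltnP x (2 * 2 ^ k).
  have E3 : 3 * 2 ^ k + x = 4 * 2 ^ k + (x - 2 ^ k) by lia.
  have E2 : 2 * 2 ^ k + x = 3 * 2 ^ k + (x - 2 ^ k) by lia.
  by rewrite E3 E2 !tm_mul_expD; [case: (tm (x - _).+1) | lia | lia].
have E3 : 3 * 2 ^ k + x = 5 * 2 ^ k + (x - 2 * 2 ^ k) by lia.
have E2 : 2 * 2 ^ k + x = 4 * 2 ^ k + (x - 2 * 2 ^ k) by lia.
by rewrite E3 E2 !tm_mul_expD; [case: (tm (x - _).+1) | lia | lia].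
Qed.

Lemma factorE a n : factor a.+1 (a + n) = [seq tm (a + k).+1 | k <- iota 0 n].
Proof.
rewrite /factor subSS addKn -[a.+1]addn0 iotaDl -map_comp.
by apply: eq_map => k /=; rewrite addSn.
Qed.

Lemma eq_block m i j :
  (forall k, k < m -> tm (i * m + k).+1 = tm (j * m + k).+1) ->
  block m i = block m j.
Proof.
move=> eq_tm; rewrite /block !mulSn ![m + _]addnC !factorE.
by apply/eq_in_map => k; rewrite mem_iota => /andP[_ ltkm]; apply: eq_tm.
Qed.

Lemma Kfrak_le_of_eq_block m i j : i < j -> block m i = block m j -> Kfrak_le m j.+1.
Proof.
move=> ltij eq_ij; exists j.+1; split=> [|antipower]; first by rewrite leqnn.
by have := antipower i j (leqW ltij) (ltnSn j) eq_ij; lia.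
Qed.

Theorem lemma1 (m r l h p q : nat) :
  0 < m -> 2 <= l ->
  h < 2 ^ (l - 2) ->
  r * m = p * 2 ^ l.+1 + 2 ^ (l - 1) + h ->
  r.+1 * m <= p * 2 ^ l.+1 + 5 * 2 ^ (l - 2) ->
  (r + 2 ^ (l - 2)) * m = q * 2 ^ l.+1 + 3 * 2 ^ (l - 2) + h ->
  tm p.+1 != tm q.+1 ->
  factor (r * m).+1 (r.+1 * m) =
    factor ((r + 2 ^ (l - 2)) * m).+1 ((r + 2 ^ (l - 2)).+1 * m)
  /\ Kfrak_le m (r + 2 ^ (l - 2)).+1.
Proof.
move=> m_gt0; case: l => [|[|k]] // _; rewrite !subSS !subn0.
move=> lt_h def_rm le_r1m def_ram tm_pq.
have a_gt0 : 0 < 2 ^ k by rewrite expn_gt0.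
have pow1 : 2 ^ k.+1 = 2 * 2 ^ k by rewrite expnS.
have pow3 : 2 ^ k.+3 = 8 * 2 ^ k by rewrite !expnS; lia.
have eq_tm i : i < m -> tm (r * m + i).+1 = tm ((r + 2 ^ k) * m + i).+1.
  move=> lt_im; have lt_x : h + i < 3 * 2 ^ k by rewrite mulSn in le_r1m; lia.
  have -> : r * m + i = p * 2 ^ k.+3 + (2 * 2 ^ k + (h + i)) by lia.
  have -> : (r + 2 ^ k) * m + i = q * 2 ^ k.+3 + (3 * 2 ^ k + (h + i)) by lia.
  rewrite (tm_mul_expD p) ?(tm_mul_expD q) ?tm_window_compl; [|lia..].
  by move: tm_pq; case: (tm p.+1); case: (tm q.+1); case: (tm (3 * _ + _).+1).
have eq_blocks : block m r = block m (r + 2 ^ k) by apply: eq_block.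
split; first exact: eq_blocks.
by apply: Kfrak_le_of_eq_block eq_blocks; lia.
Qed.
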